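(* Let $\Gamma\subset\mathbf{Z}^n$ be an almost periodic pattern. Then the function $\rho_\Gamma:\mathbf{Z}^n\to\mathbf{R}$ is Bohr almost periodic, i.e. for every $\varepsilon>0$ the set $\{v\in\mathbf{Z}^n : \sup_{u\in\mathbf{Z}^n}|\rho_\Gamma(u)-\rho_\Gamma(u+v)|<\varepsilon\}$ is relatively dense.
   Context: Balls are for the sup norm: $B(x,R)=\{y:\max_i|x_i-y_i|<R\}$, $B_R=B(0,R)$, $[B]=B\cap\mathbf{Z}^n$. Relatively dense: there is $R_0>0$ such that every ball of radius at least $R_0$ meets the set; uniformly discrete: there is $r>0$ such that every ball of radius at most $r$ contains at most one point; Delone: both. $D_R^+(\Gamma)=\sup_{x\in\mathbf{R}^n}\frac{\operatorname{Card}(B(x,R)\cap\Gamma)}{\operatorname{Card}(B(x,R)\cap\mathbf{Z}^n)}$. A Delone set $\Gamma\subset\mathbf{Z}^n$ is an almost periodic pattern if for every $\varepsilon>0$ there exist $R_\varepsilon>0$ and a relatively dense set $\mathcal N_\varepsilon$ with $D_R^+((\Gamma+v)\Delta\Gamma)<\varepsilon$ for all $R\ge R_\varepsilon$, $v\in\mathcal N_\varepsilon$. The density of a set $A\subset\mathbf{Z}^n$ is $D(A)=\lim_{R\to\infty}\operatorname{Card}(A\cap[B_R])/\operatorname{Card}[B_R]$ (the paper uses that these densities exist for the sets considered). For $v\in\mathbf{Z}^n$, $\rho_\Gamma(v)=\frac{D(\Gamma\cap(\Gamma-v))}{D(\Gamma)}\in[0,1]$. *)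

From HB Require Import structures.
From mathcomp Require Import all_boot all_order all_algebra.
From mathcomp Require Import all_classical all_reals all_analysis.
From mathcomp Require Import finmap.
Unset Printing Implicit Defensive.
Import Order.TTheory GRing.Theory Num.Theory.
Import numFieldNormedType.Exports.
Local Open Scope classical_set_scope.
Local Open Scope ring_scope.

Definition zpt (n : nat) := {ffun 'I_n -> int}.
Definition rpt (R : realType) (n : nat) := 'I_n -> R.

Definition zadd {n} (y v : zpt n) : zpt n := [ffun i => y i + v i].
Definition zsub {n} (y v : zpt n) : zpt n := [ffun i => y i - v i].

Definition zball {R : realType} {n} (x : rpt R n) (r : R) : set (zpt n) :=
  [set y | forall i : 'I_n, `|x i - (y i)%:~R| < r].

Definition card_set {n} (A : set (zpt n)) : nat := (#|` fset_set A |)%fset.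

Definition rel_dense (R : realType) {n} (A : set (zpt n)) : Prop :=
  exists R0 : R, 0 < R0 /\
    forall (x : rpt R n) (r : R), R0 <= r -> exists y, A y /\ zball x r y.

Definition unif_discrete (R : realType) {n} (A : set (zpt n)) : Prop :=
  exists r0 : R, 0 < r0 /\
    forall (x : rpt R n) (r : R), r <= r0 ->
      forall y z, A y -> zball x r y -> A z -> zball x r z -> y = z.

Definition delone (R : realType) {n} (A : set (zpt n)) : Prop :=
  rel_dense R A /\ unif_discrete R A.

Definition upper_dens {R : realType} {n} (A : set (zpt n)) (r : R) : R :=
  sup [set ((card_set (A `&` zball x r))%:R / (card_set (zball x r))%:R : R)
      | x in [set: rpt R n]].

Definition translate {n} (A : set (zpt n)) (v : zpt n) : set (zpt n) :=
  [set y | A (zsub y v)].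

Definition symdiff {T} (A B : set T) : set T := (A `\` B) `|` (B `\` A).

Definition almost_periodic_pattern (R : realType) {n} (G : set (zpt n)) : Prop :=
  delone R G /\
  forall eps : R, 0 < eps ->
    exists Reps : R, 0 < Reps /\
    exists N : set (zpt n), rel_dense R N /\
      forall (r : R) (v : zpt n), Reps <= r -> N v ->
        upper_dens (symdiff (translate G v) G) r < eps.

Definition origin (R : realType) n : rpt R n := fun _ => 0.

Definition density (R : realType) {n} (A : set (zpt n)) : R :=
  lim ((fun r : R => ((card_set (A `&` zball (origin R n) r))%:R /
                     (card_set (zball (origin R n) r))%:R : R)) x @[x --> +oo%R]).

Definition rho (R : realType) {n} (G : set (zpt n)) (v : zpt n) : R :=
  density R (G `&` [set y | G (zadd y v)]) / density R G.

From HB Require Import structures.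
From mathcomp Require Import all_boot all_order all_algebra.
From mathcomp Require Import all_classical all_reals all_analysis.
From mathcomp Require Import finmap zify ring lra.
Import Order.TTheory GRing.Theory Num.Theory.
Import numFieldNormedType.Exports.
Local Open Scope classical_set_scope.
Local Open Scope ring_scope.

(* Write X_u = G ∩ (G - u), so that rho(u) = D(X_u) / D(G).  The densities
   D(X_u) exist: almost periodicity of G makes the count of X_u in any large
   box close to its count in some box of the same radius lying near the origin,
   and averaging the counts in the translates of a box of radius m over a box of
   radius K >> m then shows that the box densities form a Cauchy sequence.  If v
   is an almost period, X_u and X_(u+v) differ only inside a translate of
   (G + v) Δ G, whose upper density is small at all large radii; so D(X_u) and
   D(X_(u+v)), hence rho(u) and rho(u + v), are uniformly close, and the almost
   periods form a relatively dense set. *)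

Definition zorigin n : zpt n := [ffun _ => 0].

Definition box_size (n m : nat) : nat := ((2 * m).-1 ^ n)%N.

Section Boxes.
Context {n : nat}.
Implicit Types (y z w : zpt n) (m : nat).

Definition box_point z m (j : {ffun 'I_n -> 'I_(2 * m).-1}) : zpt n :=
  [ffun i => z i + (j i)%:Z - (m%:Z - 1)].

Definition box z m : {fset zpt n} :=
  [fset box_point z m j | j : {ffun 'I_n -> 'I_(2 * m).-1}]%fset.

Lemma boxP y z m : reflect (forall i, `|y i - z i| < m%:Z) (y \in box z m).
Proof.
apply: (iffP idP).
  move=> /imfsetP [j _ ->] i; rewrite ffunE.
  have := ltn_ord (j i); move: (nat_of_ord (j i)) => k hk.
  rewrite ltr_norml; apply/andP; split; lia.
move=> H.
have Hj i : (absz (y i - z i + (m%:Z - 1))%R < (2 * m).-1)%N.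
  by have := H i; rewrite ltr_norml => /andP[]; lia.
apply/imfsetP; exists [ffun i => Ordinal (Hj i)] => //.
apply/ffunP => i /=; rewrite !ffunE /=.
by have := H i; rewrite ltr_norml => /andP[]; lia.
Qed.

Lemma box_point_inj z m : injective (box_point z m).
Proof.
move=> j1 j2 /ffunP h; apply/ffunP => i; have := h i; rewrite !ffunE => e.
by apply: val_inj => /=; lia.
Qed.

Lemma card_box z m : #|` box z m| = box_size n m.
Proof.
rewrite card_imfset; last exact: box_point_inj.
rewrite -(card_uniqP (enum_finmem_uniq _)) (eq_card (enum_finmemE _)) /=.
by rewrite card_ffun !card_ord.
Qed.

Lemma box_sym y z m : (y \in box z m) = (z \in box y m).
Proof. by apply/boxP/boxP => H i; rewrite distrC. Qed.

Lemma box_subset z z' m m' :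
  (forall i, `|z i - z' i| + m%:Z <= m'%:Z) -> (box z m `<=` box z' m')%fset.
Proof.
move=> H; apply/fsubsetP => y /boxP hy; apply/boxP => i.
have := hy i; have := H i; lia.
Qed.

Lemma zadd_inj w : injective (zadd^~ w).
Proof. by move=> a b /ffunP h; apply/ffunP => i /=; have := h i; rewrite /zadd !ffunE => /addIr. Qed.

Lemma zaddK w : cancel (zadd^~ w) (zsub^~ w).
Proof. by move=> y; apply/ffunP => i /=; rewrite /zadd /zsub !ffunE addrK. Qed.

Lemma zsubK w : cancel (zsub^~ w) (zadd^~ w).
Proof. by move=> y; apply/ffunP => i /=; rewrite /zadd /zsub !ffunE subrK. Qed.

Lemma zaddA y u w : zadd y (zadd u w) = zadd (zadd y u) w.
Proof. by apply/ffunP => i /=; rewrite /zadd !ffunE addrA. Qed.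

Lemma zaddAC y u w : zadd (zadd y u) w = zadd (zadd y w) u.
Proof. by apply/ffunP => i /=; rewrite /zadd !ffunE addrAC. Qed.

Lemma box_zadd z w m : box (zadd z w) m = [fset zadd y w | y in box z m]%fset.
Proof.
apply/fsetP => y; apply/idP/imfsetP => [/boxP H | [x /boxP H ->]].
  exists (zsub y w); last by apply/ffunP => i /=; rewrite /zadd /zsub !ffunE; lia.
  by apply/boxP => i /=; have := H i; rewrite /zadd /zsub !ffunE; lia.
by apply/boxP => i /=; have := H i; rewrite /zadd /zsub !ffunE; lia.
Qed.

End Boxes.

Section FsetSums.
Variables (T : choiceType) (V : nmodType).
Implicit Types (F : {fset T}) (f : T -> V).

Lemma big_enum_finmem F f : \sum_(x <- enum_finmem (mem F)) f x = \sum_(x <- F) f x.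
Proof. by apply/perm_big/uniq_perm; rewrite ?enum_finmem_uniq ?fset_uniq. Qed.

Lemma sumr_const_fset F (c : V) : \sum_(x <- F) c = c *+ #|` F|.
Proof. by rewrite card_fset_sum1 -sumrMnr; apply: eq_bigr => x _; rewrite mulr1n. Qed.

Lemma big_fset_subD F1 F2 f : (F1 `<=` F2)%fset ->
  \sum_(x <- F2) f x = \sum_(x <- F1) f x + \sum_(x <- (F2 `\` F1)%fset) f x.
Proof.
move=> sub; rewrite (big_fsetID _ (mem F1)) /=; congr (_ + _).
  apply: eq_fbigl => x; rewrite !inE /=; apply/andP/idP => [[]//|xF1].
  by rewrite xF1 (fsubsetP sub).
by apply: eq_fbigl => x; rewrite !inE /= andbC.
Qed.

End FsetSums.
Arguments big_fset_subD {T V F1 F2} f.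

Section Counting.
Context {R : realDomainType} {n : nat}.
Implicit Types (A B C D : set (zpt n)) (F : {fset zpt n}).

Definition npoints A F : R := \sum_(y <- F) (y \in A)%:R.

Lemma npoints_ge0 A F : 0 <= npoints A F.
Proof. exact: sumr_ge0. Qed.

Lemma npoints_card A F : npoints A F = (#|` [fset y in F | y \in A]%fset|)%:R.
Proof.
rewrite /npoints card_fset_sum1 natr_sum -big_fset_condE /= [RHS]big_mkcond /=.
by apply: eq_bigr => y _; case: (y \in A).
Qed.

Lemma npoints_le_card A F : npoints A F <= (#|` F|)%:R.
Proof. by rewrite card_fset_sum1 natr_sum; apply: ler_sum => y _; case: (y \in A). Qed.

Lemma le_npoints A {F1 F2} : (F1 `<=` F2)%fset -> npoints A F1 <= npoints A F2.
Proof. by move=> sub; rewrite /npoints (big_fset_subD _ sub) lerDl npoints_ge0. Qed.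

Lemma npoints_sandwich A {F1 F2 F3 F4} :
  (F1 `<=` F3)%fset -> (F3 `<=` F2)%fset -> (F1 `<=` F4)%fset -> (F4 `<=` F2)%fset ->
  `|npoints A F3 - npoints A F4| <= (#|` F2|)%:R - (#|` F1|)%:R.
Proof.
move=> s13 s32 s14 s42; have s12 := fsubset_trans s13 s32.
have card_diff : (#|` (F2 `\` F1)%fset|)%:R = (#|` F2|)%:R - (#|` F1|)%:R :> R.
  by rewrite cardfsDS // natrB ?fsubset_leq_card.
have := le_npoints A s13; have := le_npoints A s32.
have := le_npoints A s14; have := le_npoints A s42.
have := npoints_le_card A (F2 `\` F1)%fset.
have -> : npoints A F2 = npoints A F1 + npoints A (F2 `\` F1)%fset.
  exact: big_fset_subD.
(* [lra] would read the [fsubset] hypotheses as order constraints and diverge. *)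
rewrite card_diff ler_norml => *; clear s12 s13 s14 s32 s42.
by apply/andP; split; lra.
Qed.

Lemma npoints_diff_le A B C D F :
  (forall y, `|(y \in A)%:R - (y \in B)%:R| <= (y \in C)%:R + (y \in D)%:R :> R) ->
  `|npoints A F - npoints B F| <= npoints C F + npoints D F.
Proof.
move=> H; rewrite /npoints -sumrB -big_split /=.
by apply: le_trans (ler_norm_sum _ _ _) _; apply: ler_sum => y _.
Qed.

Lemma npoints_box_zadd A z w m :
  npoints A (box (zadd z w) m) = npoints [set y | A (zadd y w)] (box z m).
Proof.
rewrite /npoints box_zadd big_imfset /=; last by move=> ? ? _ _; apply: zadd_inj.
by rewrite big_enum_finmem; apply: eq_bigr => y _; congr (_%:R); apply/idP/idP; rewrite !in_setE.
Qed.

End Counting.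

Section BoxSize.
Variable R : realFieldType.

Lemma ler_subXX (x y : R) k : 0 <= y -> y <= x ->
  x ^+ k.+1 - y ^+ k.+1 <= (x - y) * (k.+1%:R * x ^+ k).
Proof.
move=> y0 yx; have x0 := le_trans y0 yx.
rewrite subrXX; apply: ler_wpM2l; first by rewrite subr_ge0.
have -> : k.+1%:R * x ^+ k = \sum_(i < k.+1) x ^+ k.
  by rewrite sumr_const card_ord mulr_natl.
apply: ler_sum => i _ /=.
have hi : (i <= k)%N by rewrite -ltnS.
rewrite -[X in _ <= x ^+ X](subnK hi) exprD; apply: ler_wpM2l.
  exact: exprn_ge0.
by rewrite lerXn2r ?nnegrE.
Qed.

Lemma natr_box_size n k : (0 < k)%N -> (box_size n k)%:R = (2 * k%:R - 1) ^+ n :> R.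
Proof. by move=> k0; rewrite /box_size natrX -subn1 natrB ?natrM //; lia. Qed.

Lemma box_size_gt0 n k : (0 < k)%N -> 0 < (box_size n k)%:R :> R.
Proof. by move=> k0; rewrite ltr0n expn_gt0; lia. Qed.

Lemma box_size_shell n a c : (a < c)%N ->
  (box_size n (c + a))%:R - (box_size n (c - a))%:R <=
     n%:R * 2 ^+ n.+1 * a%:R / c%:R * (box_size n c)%:R :> R.
Proof.
move=> ac; have c0 : (0 < c)%N by lia.
rewrite !natr_box_size ?addn_gt0 ?subn_gt0 ?c0 // natrD natrB 1?ltnW //.
have ac' : (a%:R : R) + 1 <= c%:R by rewrite natr1 ler_nat.
have a0 : 0 <= (a%:R : R) by [].
case: n => [|k]; first by rewrite !expr0 subrr mul0r !mul0r.
set t := 2 * c%:R - 1; set X := 2 * (c%:R + a%:R) - 1; set Y := 2 * (c%:R - a%:R) - 1.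
have t0 : 0 <= t by rewrite /t; lra.
have hXk : X ^+ k <= 2 ^+ k * t ^+ k.
  by rewrite -exprMn; apply: lerXn2r; rewrite ?nnegrE /X /t; lra.
have Y0 : 0 <= Y by rewrite /Y; lra.
have YX : Y <= X by rewrite /X /Y; lra.
apply: le_trans (ler_subXX _ _ k Y0 YX) _.
rewrite (_ : X - Y = 4 * a%:R); last by rewrite /X /Y; lra.
apply: (@le_trans _ _ (4 * a%:R * (k.+1%:R * (2 ^+ k * t ^+ k)))).
  by apply: ler_wpM2l; [lra | apply: ler_wpM2l].
have -> : k.+1%:R * 2 ^+ k.+2 * a%:R / c%:R * t ^+ k.+1 =
   4 * a%:R * (k.+1%:R * (2 ^+ k * t ^+ k)) * (t / c%:R) :> R.
  by rewrite !exprS; field; lra.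
rewrite ler_peMr //; last by rewrite ler_pdivlMr ?mul1r /t; lra.
by rewrite !mulr_ge0 ?exprn_ge0 //; lra.
Qed.

End BoxSize.

Section BoxAverages.
Context {R : realFieldType} {n : nat}.
Implicit Types (A : set (zpt n)) (Q : {fset zpt n}) (y z w : zpt n).

Local Notation bsize m := ((box_size n m)%:R : R).

Lemma sum_npoints_box_translates A Q (Inner Outer : {fset zpt n}) m :
  (forall z, z \in Q -> (box z m `<=` Outer)%fset) ->
  (forall y, y \in Inner -> (box y m `<=` Q)%fset) -> (Inner `<=` Outer)%fset ->
  bsize m * npoints A Inner <= \sum_(z <- Q) npoints A (box z m) <= bsize m * npoints A Outer.
Proof.
move=> QOuter InnerQ InnerOuter.
(* Each point y of Outer is counted once for every z in Q with y in box z m. *)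
have -> : \sum_(z <- Q) npoints (R:=R) A (box z m) =
          \sum_(y <- Outer) ((y \in A)%:R * npoints [set` box y m] Q).
  transitivity (\sum_(z <- Q) \sum_(y <- Outer) ((y \in A)%:R * (y \in box z m)%:R : R)).
    apply: eq_big_seq => z zQ; rewrite -(big_fset_incl _ (QOuter z zQ)).
      by apply: eq_big_seq => y ->; rewrite mulr1.
    by move=> y _ /negbTE ->; rewrite mulr0.
  rewrite exchange_big; apply: eq_bigr => y _; rewrite mulr_sumr.
  by apply: eq_bigr => z _; rewrite box_sym mem_setE.
have count_le y : npoints [set` box y m] Q <= bsize m.
  rewrite npoints_card -(card_box y m) ler_nat fsubset_leq_card //.
  by apply/fsubsetP => x; rewrite !inE /= mem_setE => /andP[].
have count_eq y : y \in Inner -> npoints [set` box y m] Q = bsize m.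
  move=> yInner; rewrite npoints_card -(card_box y m); congr (_%:R); congr (#|` _|).
  apply/fsetP => x; rewrite !inE /= mem_setE; apply/andP/idP => [[]//|xb].
  by rewrite xb (fsubsetP (InnerQ y yInner)).
apply/andP; split.
  rewrite (big_fset_subD _ InnerOuter) /npoints mulr_sumr.
  rewrite (eq_big_seq (fun y => (y \in A)%:R * npoints [set` box y m] Q)); last first.
    by move=> y yInner; rewrite count_eq // mulrC.
  by rewrite lerDl; apply: sumr_ge0 => y _; rewrite mulr_ge0 ?npoints_ge0.
rewrite /npoints mulr_sumr; apply: ler_sum => y _; rewrite mulrC.
by apply: ler_wpM2r; [case: (y \in A) | exact: count_le].
Qed.

Lemma box_subset_origin {m m'} : (m <= m')%N -> (box (zorigin n) m `<=` box (zorigin n) m')%fset.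
Proof. by move=> mm'; apply: box_subset => i; rewrite ffunE subrr normr0 add0r lez_nat. Qed.

Definition box_recurrent A (d : R) (M s : nat) := forall m z, (M <= m)%N ->
  exists2 w : zpt n, (forall i, `|w i| < s%:Z) &
    `|npoints A (box z m) - npoints A (box w m)| <= d * bsize m.

Lemma npoints_box_origin {A d M s m} z : box_recurrent A d M s -> (M <= m)%N -> (s <= m)%N ->
  `|npoints A (box z m) - npoints A (box (zorigin n) m)| <=
     d * bsize m + (bsize (m + s) - bsize (m - s)).
Proof.
move=> rec Mm sm; have [w ws zw] := rec m z Mm.
have near_origin : `|npoints A (box w m) - npoints A (box (zorigin n) m)| <=
                   bsize (m + s) - bsize (m - s).
  rewrite -!(card_box (zorigin n)); apply: npoints_sandwich;
    rewrite ?box_subset_origin ?leq_addr ?leq_subr //;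
    by apply: box_subset => i; have := ws i; rewrite ffunE; lia.
rewrite -(subrKA (npoints A (box w m))).
by apply: le_trans (ler_normD _ _) _; apply: lerD.
Qed.

Definition box_density A k : R := npoints A (box (zorigin n) k) / bsize k.

Section TwoScales.
Variables (A : set (zpt n)) (m K : nat).
Let S : R := \sum_(z <- box (zorigin n) K) npoints A (box z m).

Lemma sum_npoints_box_recurrent {d M s} : box_recurrent A d M s -> (M <= m)%N -> (s <= m)%N ->
  `|S - bsize K * npoints A (box (zorigin n) m)| <=
    bsize K * (d * bsize m + (bsize (m + s) - bsize (m - s))).
Proof.
move=> rec Mm sm.
rewrite -(card_box (zorigin n) K) !mulr_natl -!sumr_const_fset -sumrB.
apply: le_trans (ler_norm_sum _ _ _) _; apply: ler_sum => z _.
exact: npoints_box_origin rec Mm sm.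
Qed.

Lemma sum_npoints_box_center : (m <= K)%N ->
  `|S - bsize m * npoints A (box (zorigin n) K)| <= bsize m * (bsize (K + m) - bsize (K - m)).
Proof.
move=> mK; have bm0 : 0 <= bsize m by [].
have sub_in := box_subset_origin (leq_subr m K).
have sub_out := box_subset_origin (leq_addr m K).
have sub_in_out := fsubset_trans sub_in sub_out.
have /andP[lo hi] : bsize m * npoints A (box (zorigin n) (K - m)) <= S <=
                    bsize m * npoints A (box (zorigin n) (K + m)).
  apply: sum_npoints_box_translates sub_in_out.
  - by move=> z /boxP zK; apply: box_subset => i; have := zK i; rewrite ffunE; lia.
  - by move=> y /boxP yK; apply: box_subset => i; have := yK i; rewrite ffunE; lia.
have := npoints_sandwich (R:=R) A sub_in_out (fsubset_refl _) (fsubset_refl _) sub_in_out.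
rewrite !card_box ler_norml => /andP[_] /(ler_wpM2l bm0).
have /(ler_wpM2l bm0) := le_npoints (R:=R) A sub_in.
have /(ler_wpM2l bm0) := le_npoints (R:=R) A sub_out.
rewrite ler_norml !mulrBr => *; clear sub_in sub_out sub_in_out.
by apply/andP; split; lra.
Qed.

End TwoScales.

Lemma box_density_dist {A d M s} m K : box_recurrent A d M s ->
  (M <= m)%N -> (s < m)%N -> (m < K)%N ->
  `|box_density A K - box_density A m| <=
    d + n%:R * 2 ^+ n.+1 * s%:R / m%:R + n%:R * 2 ^+ n.+1 * m%:R / K%:R.
Proof.
move=> rec Mm sm mK; set C := n%:R * 2 ^+ n.+1.
have bm0 : 0 < bsize m by apply: box_size_gt0; lia.
have bK0 : 0 < bsize K by apply: box_size_gt0; lia.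
pose S : R := \sum_(z <- box (zorigin n) K) npoints A (box z m).
have near := sum_npoints_box_recurrent A m K rec Mm (ltnW sm).
have center := sum_npoints_box_center A m K (ltnW mK).
have shell_m : bsize (m + s) - bsize (m - s) <= C * s%:R / m%:R * bsize m.
  exact: box_size_shell.
have shell_K : bsize (K + m) - bsize (K - m) <= C * m%:R / K%:R * bsize K.
  exact: box_size_shell.
have : `|bsize m * npoints A (box (zorigin n) K) - bsize K * npoints A (box (zorigin n) m)|
       <= bsize m * bsize K * (d + C * s%:R / m%:R + C * m%:R / K%:R).
  have -> : bsize m * bsize K * (d + C * s%:R / m%:R + C * m%:R / K%:R) =
    bsize m * (C * m%:R / K%:R * bsize K) + bsize K * (d * bsize m + C * s%:R / m%:R * bsize m).
    by ring.
  apply: le_trans (ler_distD S _ _) _; rewrite distrC; apply: lerD.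
    exact: le_trans center (ler_wpM2l (ltW bm0) shell_K).
  by apply: le_trans near (ler_wpM2l (ltW bK0) _); rewrite lerD2l.
have -> : bsize m * npoints A (box (zorigin n) K) - bsize K * npoints A (box (zorigin n) m) =
          bsize m * bsize K * (box_density A K - box_density A m).
  by rewrite /box_density; field; rewrite !gt_eqF.
by rewrite normrM gtr0_norm ?mulr_gt0 // ler_pM2l ?mulr_gt0.
Qed.

End BoxAverages.

Definition recurrent_at_all_scales (R : realFieldType) {n} (A : set (zpt n)) :=
  forall d : R, 0 < d -> exists M s, box_recurrent A d M s.

Lemma natr_div_eventually_le {R : archiFieldType} (x e : R) : 0 < e ->
  exists N : nat, forall k, (N <= k)%N -> x / k%:R <= e.
Proof.
move=> e0; exists (Num.truncn (x / e)).+1 => k Nk.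
have k0 : 0 < (k%:R : R) by rewrite ltr0n; lia.
rewrite ler_pdivrMr // mulrC -ler_pdivrMr //; apply/ltW/(lt_le_trans (truncnS_gt _)).
by rewrite ler_nat.
Qed.

Section Convergence.
Context {R : realType} {n : nat}.
Implicit Types (A : set (zpt n)) (z : zpt n).

Lemma box_density_cauchy {A} : recurrent_at_all_scales R A ->
  forall e : R, 0 < e -> exists m K0 : nat, forall K, (K0 <= K)%N ->
    `|box_density A K - box_density A m| < e.
Proof.
move=> rec e e0; have [M [s recA]] := rec (e / 4) ltac:(lra).
set C : R := n%:R * 2 ^+ n.+1.
have [N1 hN1] := natr_div_eventually_le (C * s%:R) (e / 4) ltac:(lra).
set m := maxn (maxn M s.+1) N1.
have [N2 hN2] := natr_div_eventually_le (C * m%:R) (e / 4) ltac:(lra).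
exists m, (maxn m.+1 N2) => K mK.
have := box_density_dist m K recA ltac:(lia) ltac:(lia) ltac:(lia).
have := hN1 m ltac:(lia); have := hN2 K ltac:(lia).
rewrite -/C; lra.
Qed.

Definition zreal z : rpt R n := fun i => (z i)%:~R.

Lemma zball_box z (r : R) : 0 < r -> zball (zreal z) r = [set` box z `|Num.ceil r|%N].
Proof.
move=> r0; have c0 : 0 < Num.ceil r by rewrite ceil_gt0.
have int_dist (y : zpt n) i : (`|(z i)%:~R - (y i)%:~R| < r) = (`|y i - z i| < `|Num.ceil r|%N).
  by rewrite -intrB -intr_norm -ceil_gt_int distrC gez0_abs ?ltW.
apply/seteqP; split => y /= => [H | /boxP H].
  by apply/boxP => i; rewrite -int_dist; apply: H.
by move=> i; rewrite /zreal int_dist.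
Qed.

Lemma card_set_fset (F : {fset zpt n}) : card_set [set` F] = #|` F|.
Proof. by rewrite /card_set set_fsetK. Qed.

Lemma card_set_setI_fset A (F : {fset zpt n}) :
  (card_set (A `&` [set` F]))%:R = npoints A F :> R.
Proof.
have -> : A `&` [set` F] = [set` [fset y in F | y \in A]%fset].
  apply/seteqP; split => y /=; rewrite !inE /= ?in_setE.
    by move=> [yA yF]; apply/andP; split; rewrite ?in_setE.
  by move=> /andP[yF]; rewrite in_setE.
by rewrite card_set_fset npoints_card.
Qed.

Definition ball_ratio A (r : R) : R :=
  (card_set (A `&` zball (origin R n) r))%:R / (card_set (zball (origin R n) r))%:R.

Lemma ball_ratio_box_density A (r : R) : 0 < r ->
  ball_ratio A r = box_density A `|Num.ceil r|%N.
Proof.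
move=> r0; rewrite /ball_ratio (_ : origin R n = zreal (zorigin n)).
  by rewrite zball_box // card_set_setI_fset card_set_fset card_box.
by apply/funext => i; rewrite /zreal ffunE.
Qed.

Lemma ball_ratio_cvg A : recurrent_at_all_scales R A -> cvg (ball_ratio A r @[r --> +oo]).
Proof.
move=> rec; apply/cauchy_cvgP/cauchy_exP => e e0.
have [m [K0 hK]] := box_density_cauchy rec e e0.
exists (box_density A m), K0%:R; split; first exact: num_real.
move=> r K0r; have r0 : 0 < r by apply: le_lt_trans K0r.
rewrite /= -ball_normE /= ball_ratio_box_density // distrC; apply: hK.
have : 0 < Num.ceil r by rewrite ceil_gt0.
have : K0%:Z < Num.ceil r by rewrite ceil_gt_int; apply: le_lt_trans K0r; rewrite -pmulrn.
lia.
Qed.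

Lemma card_set_setI_ratio_le1 A B :
  (card_set (A `&` B))%:R / (card_set B)%:R <= 1 :> R.
Proof.
have [finB|infB] := pselect (finite_set B); last first.
  rewrite /card_set (_ : fset_set B = fset0%fset) ?cardfs0 ?invr0 ?mulr0 //.
  by rewrite /fset_set; case: pselect.
have [->|B0] := eqVneq (card_set B) 0%N; first by rewrite invr0 mulr0.
rewrite ler_pdivrMr ?mul1r ?ler_nat ?ltr0n ?lt0n //.
have finAB : finite_set (A `&` B) := sub_finite_set (@subIsetr _ A B) finB.
by apply: fsubset_leq_card; rewrite -fset_set_sub //; apply: subIsetr.
Qed.

Lemma npoints_box_le_upper_dens A z (r : R) : 0 < r ->
  npoints A (box z `|Num.ceil r|%N) <= upper_dens A r * (box_size n `|Num.ceil r|%N)%:R.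
Proof.
move=> r0; have ratio_le : (card_set (A `&` zball (zreal z) r))%:R /
    (card_set (zball (zreal z) r))%:R <= upper_dens A r.
  apply: ub_le_sup; last by exists (zreal z).
  by exists 1 => _ [x _ <-]; apply: card_set_setI_ratio_le1.
move: ratio_le; rewrite zball_box // card_set_setI_fset card_set_fset card_box.
by rewrite ler_pdivrMr // box_size_gt0 // absz_gt0 gt_eqF // ceil_gt0.
Qed.

End Convergence.

Lemma mem_symdiff (T : Type) (A B : set T) t : (t \in symdiff A B) = ((t \in A) != (t \in B)).
Proof. by rewrite /symdiff in_setU !in_setD; case: (t \in A); case: (t \in B). Qed.

Lemma natr_andb_dist (R : numDomainType) (a b c e : bool) :
  `|(a && b)%:R - (c && e)%:R| <= (a != c)%:R + (b != e)%:R :> R.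
Proof.
by case: a; case: b; case: c; case: e;
  rewrite /= ?subrr ?normr0 ?subr0 ?sub0r ?normrN ?normr1 ?addr0 ?add0r ?ler01 ?lexx // ler_wpDl.
Qed.

Lemma lim_dist_le {R : realType} {T : Type} (F : set_system T) {FF : ProperFilter F}
    (f g : T -> R) (d : R) :
  cvg (f @ F) -> cvg (g @ F) -> (\forall x \near F, `|f x - g x| <= d) ->
  `|lim (f @ F) - lim (g @ F)| <= d.
Proof.
move=> cf cg fg; rewrite -limB // -lim_norm; last exact: is_cvgB.
by apply: limr_le => //; apply: is_cvg_norm; apply: is_cvgB.
Qed.

Lemma rel_dense_sub {R : realType} {n} {A B : set (zpt n)} :
  rel_dense R A -> A `<=` B -> rel_dense R B.
Proof.
move=> [R0 [R00 denseA]] AB; exists R0; split => // x r R0r.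
by have [y [Ay yB]] := denseA x r R0r; exists y; split => //; apply: AB.
Qed.

Section AlmostPeriodic.
Context {R : realType} {n : nat}.
Variable G : set (zpt n).
Implicit Types (u v w y z : zpt n).

Definition inter_shift u : set (zpt n) := G `&` [set y | G (zadd y u)].

Lemma mem_inter_shift u y : (y \in inter_shift u) = (y \in G) && (zadd y u \in G).
Proof. by rewrite in_setI; congr (_ && _); apply/idP/idP; rewrite !in_setE. Qed.

Lemma mem_zadd_set (A : set (zpt n)) v y : (y \in [set t | A (zadd t v)]) = (zadd y v \in A).
Proof. by apply/idP/idP; rewrite !in_setE. Qed.

Let D v := symdiff (translate G v) G.

Lemma mem_translate_symdiff v y : (y \in D v) = ((zsub y v \in G) != (y \in G)).
Proof. by rewrite mem_symdiff; congr (_ != _); apply/idP/idP; rewrite !in_setE. Qed.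

Lemma inter_shift_translate_dist u v y :
  `|(zadd y v \in inter_shift u)%:R - (y \in inter_shift u)%:R| <=
    (zadd y v \in D v)%:R + (zadd (zadd y v) u \in D v)%:R :> R.
Proof.
rewrite !mem_inter_shift !mem_translate_symdiff zaddAC !zaddK.
by rewrite (eq_sym (y \in G)) (eq_sym (zadd y u \in G)); apply: natr_andb_dist.
Qed.

Lemma inter_shift_shift_dist u v y :
  `|(y \in inter_shift u)%:R - (y \in inter_shift (zadd u v))%:R| <=
    (zadd y (zadd u v) \in D v)%:R :> R.
Proof.
rewrite !mem_inter_shift mem_translate_symdiff zaddA zaddK.
have := natr_andb_dist R (y \in G) (zadd y u \in G) (y \in G) (zadd (zadd y u) v \in G).
by rewrite eqxx add0r eq_sym.
Qed.

Lemma almost_periodic_box_recurrent u :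
  almost_periodic_pattern R G -> recurrent_at_all_scales R (inter_shift u).
Proof.
move=> [_ AP] d d0.
have [Reps [Reps0 [N [[R0 [R00 Ndense]] HN]]]] := AP (d / 2) ltac:(lra).
exists `|Num.ceil Reps|%N, `|Num.ceil R0|%N => m z Mm.
have [v [Nv zv]] := Ndense (zreal z) R0 (lexx _).
have cReps : 0 < Num.ceil Reps by rewrite ceil_gt0.
have cR0 : 0 < Num.ceil R0 by rewrite ceil_gt0.
have m0 : (0 < m)%N by lia.
exists (zsub z v) => [i|].
  rewrite /zsub ffunE abszE (gtr0_norm cR0).
  by move: (zv i); rewrite /zreal -intrB -intr_norm -ceil_gt_int.
have D_small c : npoints (D v) (box c m) <= d / 2 * (box_size n m)%:R.
  have Reps_m : Reps <= m%:R.
    apply: le_trans (ceil_ge Reps) _; rewrite pmulrn ler_int.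
    by apply: le_trans (ler_norm _) _; rewrite -abszE lez_nat.
  have m0R : 0 < (m%:R : R) by rewrite ltr0n.
  have := npoints_box_le_upper_dens (D v) c _ m0R.
  rewrite pmulrn intrKceil => /le_trans; apply.
  by apply: ler_wpM2r => //; apply/ltW/HN.
have pointwise y : `|(y \in [set t | inter_shift u (zadd t v)])%:R - (y \in inter_shift u)%:R|
    <= (y \in [set t | D v (zadd t v)])%:R + (y \in [set t | D v (zadd t (zadd v u))])%:R :> R.
  by rewrite !mem_zadd_set zaddA; apply: inter_shift_translate_dist.
rewrite -[in box z m](zsubK v z) npoints_box_zadd.
apply: le_trans (npoints_diff_le _ _ _ _ _ pointwise) _.
by rewrite -!npoints_box_zadd; have := D_small (zadd (zsub z v) v);
  have := D_small (zadd (zsub z v) (zadd v u)); lra.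
Qed.

Lemma ball_ratio_inter_shift_dist u v (r d : R) : 0 < r -> upper_dens (D v) r < d ->
  `|ball_ratio (inter_shift u) r - ball_ratio (inter_shift (zadd u v)) r| <= d.
Proof.
move=> r0 ud; rewrite !ball_ratio_box_density //; set k := `|Num.ceil r|%N.
have bk0 : 0 < (box_size n k)%:R :> R.
  by apply: box_size_gt0; rewrite absz_gt0 gt_eqF // ceil_gt0.
have pointwise y :
    `|(y \in inter_shift u)%:R - (y \in inter_shift (zadd u v))%:R| <=
    (y \in [set t | D v (zadd t (zadd u v))])%:R + (y \in @set0 (zpt n))%:R :> R.
  by rewrite mem_zadd_set in_set0 addr0; apply: inter_shift_shift_dist.
have := npoints_diff_le _ _ _ _ (box (zorigin n) k) pointwise.
rewrite -npoints_box_zadd (_ : npoints set0 _ = 0) ?addr0; last first.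
  by apply: big1 => y _; rewrite in_set0.
move=> /le_trans /(_ (npoints_box_le_upper_dens _ _ _ r0)) le_ud.
rewrite /box_density -mulrBl normrM normfV (gtr0_norm bk0) ler_pdivrMr //.
by apply: le_trans le_ud _; rewrite ler_wpM2r ?ltW.
Qed.

Lemma density_inter_shift_dist u v {Reps d : R} : almost_periodic_pattern R G ->
  (forall r, Reps <= r -> upper_dens (D v) r < d) ->
  `|density R (inter_shift u) - density R (inter_shift (zadd u v))| <= d.
Proof.
move=> AP ud; apply: lim_dist_le;
  try exact/ball_ratio_cvg/almost_periodic_box_recurrent.
near=> r; apply: ball_ratio_inter_shift_dist; last first.
  by apply: ud; near: r; apply: nbhs_pinfty_ge; exact: num_real.
by near: r; apply: nbhs_pinfty_gt; exact: num_real.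
Unshelve. all: by end_near.
Qed.

End AlmostPeriodic.

Theorem lemma2p7 (R : realType) (n : nat) (G : set (zpt n)) :
  almost_periodic_pattern R G ->
  forall eps : R, 0 < eps ->
    rel_dense R [set v : zpt n |
      sup [set `|rho R G u - rho R G (zadd u v)| | u in [set: zpt n]] < eps].
Proof.
move=> AP eps eps0; have [half_ge0 half_lt] : 0 <= eps / 2 /\ eps / 2 < eps by split; lra.
set DG := density R G.
(* If [DG = 0] then [rho] vanishes identically, [x / 0] being [0]. *)
pose d := if DG == 0 then 1 else eps * `|DG| / 2.
have d0 : 0 < d by rewrite /d; case: eqP => // /eqP DG0; rewrite !mulr_gt0 ?normr_gt0.
have [Reps [_ [N [Ndense ud]]]] := AP.2 d d0.
apply: (rel_dense_sub Ndense) => v Nv /=.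
have rho_dist u : `|rho R G u - rho R G (zadd u v)| <= eps / 2.
  rewrite /rho -/DG -mulrBl normrM normfV.
  have [->|DG0] := eqVneq DG 0; first by rewrite normr0 invr0 mulr0.
  rewrite ler_pdivrMr ?normr_gt0 //.
  apply: le_trans (density_inter_shift_dist G u v AP (fun r Rr => ud r v Rr Nv)) _.
  by rewrite /d (negbTE DG0) mulrAC.
apply: le_lt_trans (ge_sup _ _) half_lt.
  by exists `|rho R G (zorigin n) - rho R G (zadd (zorigin n) v)|, (zorigin n).
by move=> _ [u _ <-]; apply: rho_dist.
Qed.
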